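(* There exist a joint distribution $P$ of $(x,a,y)$ with two protected groups $a\in\{1,2\}$ and binary labels $y\in\{0,1\}$, a score function $\mathcal{R}(x,a)\in\mathbb{R}$, and a choice of bias measure $\mathcal{B}$ (demographic parity or equal opportunity) such that the post-processing method (described in the context), with loss $\mathcal{L}$ equal to the misclassification rate, is not slack-consistent: there is an individual $(x,a)$ and slacks $0<\beta_1<\beta_2<\beta_3$ such that the values $f_{\beta_1}(x,a), f_{\beta_2}(x,a), f_{\beta_3}(x,a)$ are neither non-decreasing nor non-increasing.
   Context: Setting: individuals are pairs $(x,a)$ with features $x$ and group $a\in\{1,2\}$, label $y\in\{0,1\}$, all distributed according to $P$. A (possibly stochastic) classifier $f$ assigns to each $(x,a)$ a probability $f(x,a)\in[0,1]$ of a positive prediction. Demographic-parity bias: $\mathcal{B}(f)=E[f(x,a)\mid a=1]-E[f(x,a)\mid a=2]$. Equal-opportunity bias: $\mathcal{B}(f)=E[f(x,a)\mid a=1,y=1]-E[f(x,a)\mid a=2,y=1]$. Misclassification loss: $\mathcal{L}(f)=P(\text{prediction}\neq y)$ where the prediction is drawn positive with probability $f(x,a)$. Normalized thresholds: for a score function $\mathcal{R}$ and group $a$, a normalized threshold $\tau\in[0,1]$ denotes a (possibly randomized) threshold classifier on $\mathcal{R}(x,a)$ within group $a$, given by a randomization over at most two adjacent deterministic thresholds, whose positive prediction rate in group $a$ equals $1-\tau$. A pair $(\tau_1,\tau_2)$ thus defines a classifier (group $a$ uses $\tau_a$), and $\mathcal{L}(\tau_1,\tau_2)$, $\mathcal{B}(\tau_1,\tau_2)$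 denote its loss and bias. Post-processing method with slack $\beta>0$: among all $(\tau_1,\tau_2)\in[0,1]^2$ minimizing $\mathcal{L}(\tau_1,\tau_2)$ subject to $|\mathcal{B}(\tau_1,\tau_2)|\le\beta$, keep those with smallest $|\mathcal{B}|$; among those keep those with smallest $\tau_1$; among those return the one with smallest $\tau_2$. The resulting classifier is denoted $f_\beta$. Slack-consistency: a procedure producing $f_\beta$ for each slack $\beta>0$ is slack-consistent if for every individual $(x,a)$ the map $\beta\mapsto f_\beta(x,a)$ is monotonic (for all $\beta_1<\beta_2<\beta_3$, either $f_{\beta_1}(x,a)\le f_{\beta_2}(x,a)\le f_{\beta_3}(x,a)$ or $f_{\beta_1}(x,a)\ge f_{\beta_2}(x,a)\ge f_{\beta_3}(x,a)$). *)

From HB Require Import structures.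
From mathcomp Require Import all_boot all_order all_algebra.
From mathcomp Require Import Rstruct.
Set Implicit Arguments. Unset Strict Implicit. Unset Printing Implicit Defensive.
Import Order.TTheory GRing.Theory Num.Theory.
Local Open Scope ring_scope.

Notation R := Rdefinitions.R.

Inductive grp := G1 | G2.

Inductive bias_kind := DemParity | EqOpp.

Section Fairness.
Variable X : finType.
Variable p : X -> grp -> bool -> R.
Variable sc : X -> grp -> R.

Definition is_distribution : Prop :=
  (forall x a y, 0 <= p x a y) /\
  \sum_(x : X) (p x G1 false + p x G1 true + p x G2 false + p x G2 true) = 1.

Definition pxa (x : X) (a : grp) : R := p x a false + p x a true.
Definition mass (a : grp) : R := \sum_(x : X) pxa x a.
Definition massY (a : grp) : R := \sum_(x : X) p x a true.

Definition prob_gt (a : grp) (r : R) : R :=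
  (\sum_(x : X | r < sc x a) pxa x a) / mass a.
Definition prob_eq (a : grp) (r : R) : R :=
  (\sum_(x : X | sc x a == r) pxa x a) / mass a.

(* Normalized threshold tau in group a: the randomized threshold classifier on
   the score whose positive rate in group a is 1 - tau. *)
Definition thr (a : grp) (tau : R) (x : X) : R :=
  let r := sc x a in
  let G := prob_gt a r in
  let E := prob_eq a r in
  if 1 - tau <= G then 0
  else if G + E <= 1 - tau then 1
  else ((1 - tau) - G) / E.

Definition clf (tau1 tau2 : R) (x : X) (a : grp) : R :=
  thr a (if a is G1 then tau1 else tau2) x.

Definition E_a (f : X -> grp -> R) (a : grp) : R :=
  (\sum_(x : X) f x a * pxa x a) / mass a.
Definition E_ay1 (f : X -> grp -> R) (a : grp) : R :=
  (\sum_(x : X) f x a * p x a true) / massY a.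

Definition bias (k : bias_kind) (f : X -> grp -> R) : R :=
  match k with
  | DemParity => E_a f G1 - E_a f G2
  | EqOpp => E_ay1 f G1 - E_ay1 f G2
  end.

Definition bias_well_defined (k : bias_kind) : Prop :=
  match k with
  | DemParity => 0 < mass G1 /\ 0 < mass G2
  | EqOpp => 0 < massY G1 /\ 0 < massY G2
  end.

Definition loss (f : X -> grp -> R) : R :=
  \sum_(x : X) (f x G1 * p x G1 false + (1 - f x G1) * p x G1 true
              + f x G2 * p x G2 false + (1 - f x G2) * p x G2 true).

Definition Lt (k : bias_kind) (tau1 tau2 : R) := loss (clf tau1 tau2).
Definition Bt (k : bias_kind) (tau1 tau2 : R) := bias k (clf tau1 tau2).

Definition in01 (t : R) : Prop := 0 <= t <= 1.

(* The post-processing method with slack beta, as successive selections. *)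
Definition feasible (k : bias_kind) (beta t1 t2 : R) : Prop :=
  in01 t1 /\ in01 t2 /\ `|Bt k t1 t2| <= beta.

Definition loss_optimal (k : bias_kind) (beta t1 t2 : R) : Prop :=
  feasible k beta t1 t2 /\
  forall u1 u2, feasible k beta u1 u2 -> Lt k t1 t2 <= Lt k u1 u2.

Definition bias_minimal (k : bias_kind) (beta t1 t2 : R) : Prop :=
  loss_optimal k beta t1 t2 /\
  forall u1 u2, loss_optimal k beta u1 u2 -> `|Bt k t1 t2| <= `|Bt k u1 u2|.

Definition tau1_minimal (k : bias_kind) (beta t1 t2 : R) : Prop :=
  bias_minimal k beta t1 t2 /\
  forall u1 u2, bias_minimal k beta u1 u2 -> t1 <= u1.

Definition selected (k : bias_kind) (beta t1 t2 : R) : Prop :=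
  tau1_minimal k beta t1 t2 /\
  forall u1 u2, tau1_minimal k beta u1 u2 -> t2 <= u2.

End Fairness.

(* Under demographic parity the bias of a pair of
   normalized thresholds is just tau2 - tau1, so the slack only bounds the gap
   between the positive rates of the two groups.  In group 1 the loss keeps
   decreasing as more people are accepted, whereas in group 2 it is smallest
   when nobody is accepted and has a second local minimum when everybody is.
   Hence for a small slack the optimum accepts everybody in both groups, for a
   medium slack it rejects all of group 2 and accepts only half of group 1, and
   for a large slack it accepts all of group 1 again: the low-score member of
   group 1 is accepted with probability 1, then 1/3, then 1. *)
From HB Require Import structures.
From mathcomp Require Import all_boot all_order all_algebra.
From mathcomp Require Import Rstruct.
From mathcomp Require Import lra.
Set Implicit Arguments. Unset Strict Implicit. Unset Printing Implicit Defensive.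
Import Order.TTheory GRing.Theory Num.Theory.
Local Open Scope ring_scope.

Section Selection.
Variables (X : finType) (p : X -> grp -> bool -> R) (sc : X -> grp -> R).

Lemma thr_cases a tau x :
  let G := prob_gt p sc a (sc x a) in
  let E := prob_eq p sc a (sc x a) in
  [\/ 1 - tau <= G /\ thr p sc a tau x = 0,
      G + E <= 1 - tau /\ thr p sc a tau x = 1 |
      G < 1 - tau < G + E /\ thr p sc a tau x = (1 - tau - G) / E].
Proof.
rewrite /thr /=.
case: ifP => [|/negbT]; first by constructor 1.
case: ifP => [|/negbT]; first by constructor 2.
by rewrite -!ltNge => -> ->; constructor 3.
Qed.

Variable k : bias_kind.

Lemma selected_of_unique_minimizer beta t1 t2 :
  feasible p sc k beta t1 t2 ->
  (forall u1 u2, feasible p sc k beta u1 u2 -> Lt p sc k t1 t2 <= Lt p sc k u1 u2) ->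
  (forall u1 u2, feasible p sc k beta u1 u2 ->
     Lt p sc k u1 u2 <= Lt p sc k t1 t2 -> u1 = t1 /\ u2 = t2) ->
  selected p sc k beta t1 t2.
Proof.
move=> feas_t min_t uniq_t.
have opt_t : loss_optimal p sc k beta t1 t2 by [].
have opt_eq u1 u2 : loss_optimal p sc k beta u1 u2 -> u1 = t1 /\ u2 = t2.
  by case=> feas_u min_u; apply: uniq_t; last exact: min_u.
have bmin_t : bias_minimal p sc k beta t1 t2.
  by split=> // u1 u2 /opt_eq[-> ->].
have t1min_t : tau1_minimal p sc k beta t1 t2.
  by split=> // u1 u2 [/opt_eq[-> _] _].
by split=> // u1 u2 [[/opt_eq[_ ->] _] _].
Qed.

End Selection.

Definition cex_p (x : bool) (a : grp) (y : bool) : R :=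
  match a, x, y with
  | G1, true, false => 0 | G1, true, true => 1/7
  | G1, false, false => 1/7 | G1, false, true => 2/7
  | G2, true, false => 2/7 | G2, true, true => 0
  | G2, false, false => 0 | G2, false, true => 1/7
  end.

Definition cex_score (x : bool) (a : grp) : R := if x then 1 else 0.

Lemma cex_distribution : is_distribution cex_p.
Proof.
split; first by move=> [] [] [] /=; lra.
rewrite big_bool /=; lra.
Qed.

Lemma cex_mass : mass cex_p G1 = 4/7 /\ mass cex_p G2 = 3/7.
Proof. by rewrite /mass !big_bool /pxa /=; split; lra. Qed.

(* P(x | a) under [cex_p]. *)
Definition cex_share (a : grp) (x : bool) : R :=
  match a, x with G1, true => 1/4 | G1, false => 3/4 | G2, true => 2/3 | G2, false => 1/3 end.

Lemma cex_rates a :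
  [/\ prob_gt cex_p cex_score a 1 = 0, prob_eq cex_p cex_score a 1 = cex_share a true,
      prob_gt cex_p cex_score a 0 = cex_share a true &
      prob_eq cex_p cex_score a 0 = cex_share a false].
Proof.
case: cex_mass => mass1 mass2.
by case: a; split; rewrite /prob_gt /prob_eq big_mkcond big_bool /= ?ltxx ?ltr10
  ?ltr01 ?eqxx ?(eq_sym 0) ?oner_eq0 ?(eq_sym 1) ?oner_eq0 ?mass1 ?mass2 /pxa /=; lra.
Qed.

Notation cex_thr := (thr cex_p cex_score).

Lemma cex_thr_cases a t : in01 t ->
  let q1 := cex_share a true in let q0 := cex_share a false in
  (1 - t <= q1 /\ cex_thr a t true = (1 - t) / q1 /\ cex_thr a t false = 0) \/
  (q1 <= 1 - t /\ cex_thr a t true = 1 /\ cex_thr a t false = (1 - t - q1) / q0).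
Proof.
case/andP=> t_ge0 t_le1; case: (cex_rates a) => gt1 eq1 gt0 eq0.
have := thr_cases cex_p cex_score a t true.
have := thr_cases cex_p cex_score a t false.
rewrite /= {}gt1 {}eq1 {}gt0 {}eq0; case: a => /= -[] [? ->] [] [? ->];
  first [by left; split; [lra | split; lra] | by right; split; [lra | split; lra]
        | exfalso; lra].
Qed.

(* Loss contributed by each group as a function of its positive rate r = 1 - tau. *)
Definition cex_loss_G1 (r : R) : R :=
  if r <= 1/4 then (3 - 4 * r) / 7 else (7 - 4 * r) / 21.
Definition cex_loss_G2 (r : R) : R :=
  if r <= 2/3 then (1 + 3 * r) / 7 else (5 - 3 * r) / 7.
Definition cex_loss (u1 u2 : R) : R := cex_loss_G1 (1 - u1) + cex_loss_G2 (1 - u2).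

Lemma cex_Lt u1 u2 : in01 u1 -> in01 u2 ->
  Lt cex_p cex_score DemParity u1 u2 = cex_loss u1 u2.
Proof.
move=> /(cex_thr_cases G1) /= thr1 /(cex_thr_cases G2) /= thr2.
rewrite /Lt /loss big_bool /clf /cex_loss /cex_loss_G1 /cex_loss_G2 /=.
by case: thr1 thr2 => -[? [-> ->]] [] [? [-> ->]]; do 2 case: leP => ?; lra.
Qed.

Lemma cex_Bt u1 u2 : in01 u1 -> in01 u2 -> Bt cex_p cex_score DemParity u1 u2 = u2 - u1.
Proof.
move=> /(cex_thr_cases G1) /= thr1 /(cex_thr_cases G2) /= thr2.
rewrite /Bt /bias /E_a !big_bool /clf /pxa /=; case: cex_mass => -> ->.
by case: thr1 thr2 => -[? [-> ->]] [] [? [-> ->]]; lra.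
Qed.

Ltac cex_unfold_loss :=
  rewrite /cex_loss /cex_loss_G1 /cex_loss_G2;
  do ? (case: ifPn; rewrite -?ltNge => ?).

Lemma cex_selected beta t1 t2 l : in01 t1 -> in01 t2 -> `|t2 - t1| <= beta ->
  cex_loss t1 t2 = l ->
  (forall u1 u2, in01 u1 -> in01 u2 -> `|u2 - u1| <= beta ->
     l <= cex_loss u1 u2 /\ (cex_loss u1 u2 <= l -> u1 = t1 /\ u2 = t2)) ->
  selected cex_p cex_score DemParity beta t1 t2.
Proof.
move=> t1_01 t2_01 bias_t loss_t unique_min.
have {}unique_min u1 u2 : feasible cex_p cex_score DemParity beta u1 u2 ->
    l <= cex_loss u1 u2 /\ (cex_loss u1 u2 <= l -> u1 = t1 /\ u2 = t2).
  by case=> u1_01 [u2_01]; rewrite cex_Bt //; apply: unique_min.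
apply: selected_of_unique_minimizer.
- by split; [|split; [|rewrite cex_Bt]].
- move=> u1 u2 feas_u; have [u1_01 [u2_01 _]] := feas_u.
  by rewrite !cex_Lt // loss_t; case: (unique_min u1 u2 feas_u).
- move=> u1 u2 feas_u; have [u1_01 [u2_01 _]] := feas_u.
  by rewrite !cex_Lt // loss_t; case: (unique_min u1 u2 feas_u).
Qed.

Lemma in01_0 : in01 0. Proof. by rewrite /in01 lexx ler01. Qed.
Lemma in01_1 : in01 1. Proof. by rewrite /in01 lexx ler01. Qed.
Lemma in01_half : in01 (1/2). Proof. by apply/andP; split; lra. Qed.

Ltac cex_minimize :=
  move=> u1 u2 /andP[? ?] /andP[? ?]; rewrite ler_norml => /andP[? ?];
  cex_unfold_loss; (split=> [|?]; [lra | split; lra]).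

Lemma cex_selected_small : selected cex_p cex_score DemParity (1/10) 0 0.
Proof.
apply: (@cex_selected _ _ _ (3/7)); [exact: in01_0 | exact: in01_0 | | |].
- by rewrite subrr normr0; lra.
- by cex_unfold_loss; lra.
- by cex_minimize.
Qed.

Lemma cex_selected_medium : selected cex_p cex_score DemParity (1/2) (1/2) 1.
Proof.
apply: (@cex_selected _ _ _ (8/21)); [exact: in01_half | exact: in01_1 | | |].
- by rewrite ler_norml; apply/andP; split; lra.
- by cex_unfold_loss; lra.
- by cex_minimize.
Qed.

Lemma cex_selected_large : selected cex_p cex_score DemParity 1 0 1.
Proof.
apply: (@cex_selected _ _ _ (2/7)); [exact: in01_0 | exact: in01_1 | | |].
- by rewrite subr0 normr1.
- by cex_unfold_loss; lra.
- by cex_minimize.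
Qed.

Lemma cex_thr_low_G1 : cex_thr G1 0 false = 1 /\ cex_thr G1 (1/2) false = 1/3.
Proof.
have := cex_thr_cases G1 in01_0; have := cex_thr_cases G1 in01_half.
by rewrite /= => -[] [? [_ ->]] [] [? [_ ->]]; split; lra.
Qed.

Theorem theorem1 :
  exists (X : finType) (p : X -> grp -> bool -> R) (sc : X -> grp -> R)
         (k : bias_kind),
    is_distribution p /\ bias_well_defined p k /\
    exists (x : X) (a : grp) (beta1 beta2 beta3 : R)
           (t11 t12 t21 t22 t31 t32 : R),
      0 < pxa p x a /\
      0 < beta1 /\ beta1 < beta2 /\ beta2 < beta3 /\
      selected p sc k beta1 t11 t12 /\
      selected p sc k beta2 t21 t22 /\
      selected p sc k beta3 t31 t32 /\
      let v1 := clf p sc t11 t12 x a in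
      let v2 := clf p sc t21 t22 x a in
      let v3 := clf p sc t31 t32 x a in
      ~ (v1 <= v2 /\ v2 <= v3) /\ ~ (v3 <= v2 /\ v2 <= v1).
Proof.
exists bool, cex_p, cex_score, DemParity.
split; first exact: cex_distribution.
split; first by rewrite /bias_well_defined; case: cex_mass => -> ->; split; lra.
exists false, G1, (1/10), (1/2), 1, 0, 0, (1/2), 1, 0, 1.
split; first by rewrite /pxa /=; lra.
do 3 (split; first lra).
split; first exact: cex_selected_small.
split; first exact: cex_selected_medium.
split; first exact: cex_selected_large.
by rewrite /clf /=; case: cex_thr_low_G1 => -> ->; split=> -[]; lra.
Qed.
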